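(* Fix $L,V,W,K>0$, $\pi\in(0,1)$, $k_0\in[0,K]$, and let $\bar g=\min\{\phi_1,\pi C,\phi_2\}$ with $\phi_1=\frac{k_0}{k_1}\pi C$, $\phi_2=\frac{K-k_0}{K-k_2}\pi C$, where $k_1\in[\pi\bar K,\bar K]$ and $k_2\in[\bar K,K-\pi\frac CW]$ are as in the context (depending on the cycle length $T$). Then: (1) If $k_0\in[0,\pi\bar K)$, then $\bar g=\phi_1$, which decreases in $k_1$ and is independent of $k_2$; the global maximum of $\bar g$ is $Vk_0$, attained when $T=\frac1{j_1}\frac LV$ (positive integer $j_1$), and the global minimum is $\pi Vk_0$, attained when $T\ge\frac1\pi\frac LV$. (2) If $k_0\in[\pi\bar K,\bar K)$, then $\bar g=\min\{\phi_1,\pi C\}$, which is constant for $k_1\in[\pi\bar K,k_0]$, decreasing for $k_1\in(k_0,\bar K]$, and independent of $k_2$; the global maximum is $\pi C$, and the global minimum is $\pi Vk_0$, attained when $T\ge\frac1\pi\frac LV$. (3) If $k_0=\bar K$, then $\bar g=\pi C$ for all $k_1,k_2$. (4) If $k_0\in(\bar K,K-\pi\frac CW]$, then $\bar g=\min\{\phi_2,\pi C\}$, which is increasing for $k_2\in[\bar K,k_0)$, constant for $k_2\in[k_0,K-\pi\frac CW]$, and independent of $k_1$; the global maximum is $\pi C$, and the global minimum is $\pi(K-k_0)W$, attained when $T\ge\frac1\pi\frac LW$. (5) If $k_0\in(K-\pi\frac CW,K]$, then $\bar g=\phi_2$, which increases in $k_2$ and is independent of $k_1$; the global maximum is $(K-k_0)W$,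 attained when $T=\frac1{j_2}\frac LW$ (positive integer $j_2$), and the global minimum is $\pi(K-k_0)W$, attained when $T\ge\frac1\pi\frac LW$.
   Context: $\bar K=\frac{W}{V+W}K$, $C=V\bar K$. For cycle length $T>0$: $\frac LV=(j_1+\alpha_1)T$, $j_1=\lfloor L/(VT)\rfloor$, $0\le\alpha_1<1$; $\frac LW=(j_2+\alpha_2)T$, $j_2=\lfloor L/(WT)\rfloor$, $0\le\alpha_2<1$; $k_1=\frac{j_1+\min\{\alpha_1/\pi,1\}}{j_1+\alpha_1}\pi\bar K$, $k_2=K-\frac{j_2+\min\{\alpha_2/\pi,1\}}{j_2+\alpha_2}\pi\frac CW$. Here $\bar g$ is the average flow-rate in stationary states (periodic with period $T$) of a ring road of length $L$ with LWR traffic, triangular fundamental diagram $\min\{Vk,(K-k)W\}$, average density $k_0$, and a pretimed signal with cycle length $T$ and effective green ratio $\pi$. *)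

From Stdlib Require Import Reals Lra.
Open Scope R_scope.

Definition Kbar (V W K : R) : R := W / (V + W) * K.
Definition Ccap (V W K : R) : R := V * Kbar V W K.

Definition jpart (x : R) : R := IZR (Int_part x).
Definition apart (x : R) : R := frac_part x.

Definition ratio (pi x : R) : R :=
  (jpart x + Rmin (apart x / pi) 1) / (jpart x + apart x).

Definition k1T (L V W K pi T : R) : R :=
  ratio pi (L / V / T) * pi * Kbar V W K.
Definition k2T (L V W K pi T : R) : R :=
  K - ratio pi (L / W / T) * pi * (Ccap V W K / W).

Definition phi1 (V W K pi k0 k1 : R) : R := k0 / k1 * pi * Ccap V W K.
Definition phi2 (V W K pi k0 k2 : R) : R := (K - k0) / (K - k2) * pi * Ccap V W K.

Definition Gk (V W K pi k0 k1 k2 : R) : R :=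
  Rmin (Rmin (phi1 V W K pi k0 k1) (pi * Ccap V W K)) (phi2 V W K pi k0 k2).

Definition gbarT (L V W K pi k0 T : R) : R :=
  Gk V W K pi k0 (k1T L V W K pi T) (k2T L V W K pi T).

Definition in_k1 (V W K pi k1 : R) : Prop := pi * Kbar V W K <= k1 <= Kbar V W K.
Definition in_k2 (V W K pi k2 : R) : Prop := Kbar V W K <= k2 <= K - pi * (Ccap V W K / W).

(* On their ranges, phi_1 >= pi C exactly when k_1 <= k_0 and phi_2 >= pi C exactly when
   k_0 <= k_2; since pi Kbar < Kbar < K - pi C / W < K, the position of k_0 decides which
   terms of the minimum are active.  Along the cycle length T, phi_1 (k_1 T) = V k_0 / r and
   phi_2 (k_2 T) = (K - k_0) W / r, where r = (j + min (alpha / pi) 1) / (j + alpha) lies in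
   [1, 1 / pi], equals 1 when L / (V T) (resp. L / (W T)) is a positive integer, and equals
   1 / pi when that quotient is at most pi; this gives the extremal values of gbar. *)

From Stdlib Require Import Reals Lra Lia.
Open Scope R_scope.

Lemma Rdiv_mul_le a b c : 0 < b -> 0 <= c -> a <= b -> a / b * c <= c.
Proof.
  intros hb hc hab. assert (a / b <= 1).
  { apply (Rmult_le_reg_r b); [lra|]. unfold Rdiv. rewrite Rmult_assoc, Rinv_l; lra. }
  nra.
Qed.

Lemma Rdiv_mul_ge a b c : 0 < b -> 0 <= c -> b <= a -> c <= a / b * c.
Proof.
  intros hb hc hab. assert (1 <= a / b).
  { apply (Rmult_le_reg_r b); [lra|]. unfold Rdiv. rewrite Rmult_assoc, Rinv_l; lra. }
  nra.
Qed.

Lemma Rdiv_mul_le_contravar k a b c : 0 < a -> a <= b -> 0 <= k -> 0 <= c ->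
  k / b * c <= k / a * c.
Proof.
  intros ha hab hk hc. assert (/ b <= / a) by (apply Rinv_le_contravar; lra).
  unfold Rdiv. apply Rmult_le_compat_r, Rmult_le_compat_l; assumption.
Qed.

Lemma Rdiv_mul_lt_contravar k a b c : 0 < a -> a < b -> 0 < k -> 0 < c ->
  k / b * c < k / a * c.
Proof.
  intros ha hab hk hc. assert (/ b < / a) by (apply Rinv_lt_contravar; nra).
  unfold Rdiv. apply Rmult_lt_compat_r, Rmult_lt_compat_l; assumption.
Qed.

Lemma ratio_bounds pi x : 0 < pi < 1 -> 0 < x ->
  1 <= ratio pi x /\ ratio pi x * pi <= 1.
Proof.
  intros hpi hx. unfold ratio, jpart, apart, frac_part.
  destruct (base_Int_part x) as [hjx hxj].
  assert (hj : 0 <= IZR (Int_part x)).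
  { assert (hZ : (-1 < Int_part x)%Z) by (apply lt_IZR; lra).
    apply IZR_le; lia. }
  set (j := IZR (Int_part x)) in *. set (a := x - j).
  assert (ha : 0 <= a < 1) by (unfold a; lra).
  assert (hxa : x = j + a) by (unfold a; ring).
  rewrite <- hxa. clearbody a.
  assert (hm : x <= j + Rmin (a / pi) 1 /\ (j + Rmin (a / pi) 1) * pi <= x).
  { assert (hapi : a / pi * pi = a) by (field; lra).
    assert (0 <= a / pi) by (apply Rmult_le_pos; [lra | apply Rlt_le, Rinv_0_lt_compat; lra]).
    unfold Rmin; destruct (Rle_dec (a / pi) 1); split; nra. }
  assert (hx1 : x * / x = 1) by (field; lra).
  assert (0 < / x) by (apply Rinv_0_lt_compat; lra).
  unfold Rdiv at 2. split; nra.
Qed.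

Lemma ratio_INR pi (j : nat) : 0 < pi -> (0 < j)%nat -> ratio pi (INR j) = 1.
Proof.
  intros hpi hj. assert (0 < INR j) by (apply lt_0_INR; lia).
  unfold ratio, jpart, apart, frac_part.
  rewrite Int_part_INR, <- INR_IZR_INZ, Rminus_diag, Rdiv_0_l, Rmin_left by lra.
  field; lra.
Qed.

Lemma ratio_le_pi pi x : 0 < pi < 1 -> 0 < x <= pi -> ratio pi x = / pi.
Proof.
  intros hpi hx. unfold ratio, jpart, apart, frac_part.
  replace (Int_part x) with 0%Z by (apply Int_part_spec; simpl; lra).
  rewrite Rminus_0_r, Rplus_0_l, Rmin_left.
  - field; lra.
  - rewrite <- (Rmult_1_r (x / pi)). apply Rdiv_mul_le; lra.
Qed.

Lemma div_ratio_bounds pi x X : 0 < pi < 1 -> 0 < x -> 0 <= X ->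
  pi * X <= X / ratio pi x <= X.
Proof.
  intros hpi hx hX. destruct (ratio_bounds pi x hpi hx) as [hr1 hrpi].
  assert (hinv : pi <= / ratio pi x <= 1).
  { split.
    - apply (Rmult_le_reg_r (ratio pi x)); [lra|]. rewrite Rinv_l; lra.
    - rewrite <- Rinv_1. apply Rinv_le_contravar; lra. }
  unfold Rdiv. split; nra.
Qed.

Lemma Rinv_INR_mul_pos (j : nat) y : (0 < j)%nat -> 0 < y -> 0 < / INR j * y.
Proof.
  intros hj hy. apply Rmult_lt_0_compat; [|exact hy].
  apply Rinv_0_lt_compat, lt_0_INR. exact hj.
Qed.

Lemma ratio_at_divisor pi (j : nat) y : 0 < pi -> (0 < j)%nat -> 0 < y ->
  ratio pi (y / (/ INR j * y)) = 1.
Proof.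
  intros hpi hj hy. assert (0 < INR j) by (apply lt_0_INR; exact hj).
  replace (y / (/ INR j * y)) with (INR j) by (field; lra).
  apply ratio_INR; assumption.
Qed.

Lemma long_cycle_pos pi y T : 0 < pi -> 0 < y -> / pi * y <= T -> 0 < T.
Proof.
  intros hpi hy hT.
  assert (0 < / pi * y) by (apply Rmult_lt_0_compat; [apply Rinv_0_lt_compat|]; lra).
  lra.
Qed.

Lemma ratio_at_long pi y T : 0 < pi < 1 -> 0 < y -> / pi * y <= T -> ratio pi (y / T) = / pi.
Proof.
  intros hpi hy hT.
  assert (hT0 : 0 < T) by (apply (long_cycle_pos pi y); lra).
  assert (hpy : pi * (/ pi * y) = y) by (field; lra).
  apply ratio_le_pi; [exact hpi|]. split.
  - apply Rdiv_lt_0_compat; assumption.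
  - apply (Rmult_le_reg_r T); [exact hT0|]. unfold Rdiv.
    rewrite Rmult_assoc, Rinv_l by lra. nra.
Qed.

Section FlowRate.

Variables L V W K pi k0 : R.
Hypotheses (hL : 0 < L) (hV : 0 < V) (hW : 0 < W) (hK : 0 < K)
  (hpi : 0 < pi < 1) (hk0 : 0 <= k0 <= K).

Local Notation Kb := (Kbar V W K).
Local Notation piC := (pi * Ccap V W K).
Local Notation G := (Gk V W K pi k0).
Local Notation p1 := (phi1 V W K pi k0).
Local Notation p2 := (phi2 V W K pi k0).
Local Notation g := (gbarT L V W K pi k0).
Local Notation I1 := (in_k1 V W K pi).
Local Notation I2 := (in_k2 V W K pi).

Lemma Kbar_bounds : 0 < Kb < K.
Proof.
  assert (hKbe : Kb * (V + W) = W * K) by (unfold Kbar; field; lra).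
  split; nra.
Qed.

Lemma Ccap_eq_W : Ccap V W K = W * (K - Kb).
Proof. unfold Ccap, Kbar. field. lra. Qed.

Lemma Ccap_div_W : Ccap V W K / W = K - Kb.
Proof. rewrite Ccap_eq_W. field. lra. Qed.

Lemma k_ranges_bounds : 0 < pi * Kb < Kb /\ Kb < K - pi * (Ccap V W K / W) < K.
Proof.
  rewrite Ccap_div_W. destruct Kbar_bounds.
  assert (0 < pi * (K - Kb)) by (apply Rmult_lt_0_compat; lra).
  split; split; nra.
Qed.

Lemma piC_pos : 0 < piC.
Proof.
  destruct Kbar_bounds. unfold Ccap.
  apply Rmult_lt_0_compat; [lra|]. apply Rmult_lt_0_compat; assumption.
Qed.

Lemma phi1_le_piC x : 0 < x -> k0 <= x -> p1 x <= piC.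
Proof.
  intros. pose proof piC_pos. unfold phi1. rewrite Rmult_assoc.
  apply Rdiv_mul_le; lra.
Qed.

Lemma piC_le_phi1 x : 0 < x -> x <= k0 -> piC <= p1 x.
Proof.
  intros. pose proof piC_pos. unfold phi1. rewrite Rmult_assoc.
  apply Rdiv_mul_ge; lra.
Qed.

Lemma phi1_le_contravar a b : 0 < a -> a <= b -> p1 b <= p1 a.
Proof.
  intros. pose proof piC_pos. unfold phi1. rewrite !Rmult_assoc.
  apply Rdiv_mul_le_contravar; lra.
Qed.

Lemma phi1_lt_contravar a b : 0 < k0 -> 0 < a -> a < b -> p1 b < p1 a.
Proof.
  intros. pose proof piC_pos. unfold phi1. rewrite !Rmult_assoc.
  apply Rdiv_mul_lt_contravar; lra.
Qed.

Lemma phi2_le_piC x : x < K -> x <= k0 -> p2 x <= piC.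
Proof.
  intros. pose proof piC_pos. unfold phi2. rewrite Rmult_assoc.
  apply Rdiv_mul_le; lra.
Qed.

Lemma piC_le_phi2 x : x < K -> k0 <= x -> piC <= p2 x.
Proof.
  intros. pose proof piC_pos. unfold phi2. rewrite Rmult_assoc.
  apply Rdiv_mul_ge; lra.
Qed.

Lemma phi2_le_compat a b : a <= b -> b < K -> p2 a <= p2 b.
Proof.
  intros. pose proof piC_pos. unfold phi2. rewrite !Rmult_assoc.
  apply Rdiv_mul_le_contravar; lra.
Qed.

Lemma phi2_lt_compat a b : k0 < K -> a < b -> b < K -> p2 a < p2 b.
Proof.
  intros. pose proof piC_pos. unfold phi2. rewrite !Rmult_assoc.
  apply Rdiv_mul_lt_contravar; lra.
Qed.

Lemma Gk_eq_min_phi1 x y : k0 <= y -> y < K -> G x y = Rmin (p1 x) piC.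
Proof.
  intros. unfold Gk. apply Rmin_left.
  apply Rle_trans with piC; [apply Rmin_r | apply piC_le_phi2; assumption].
Qed.

Lemma Gk_eq_min_phi2 x y : 0 < x -> x <= k0 -> G x y = Rmin (p2 y) piC.
Proof.
  intros. unfold Gk. rewrite (Rmin_right (p1 x)) by (apply piC_le_phi1; assumption).
  apply Rmin_comm.
Qed.

Lemma Gk_eq_phi1 x y : 0 < x -> k0 <= x -> k0 <= y -> y < K -> G x y = p1 x.
Proof.
  intros. rewrite Gk_eq_min_phi1 by assumption.
  apply Rmin_left, phi1_le_piC; assumption.
Qed.

Lemma Gk_eq_phi2 x y : 0 < x -> x <= k0 -> y <= k0 -> y < K -> G x y = p2 y.
Proof.
  intros. rewrite Gk_eq_min_phi2 by assumption.
  apply Rmin_left, phi2_le_piC; assumption.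
Qed.

Lemma Gk_eq_piC x y : 0 < x -> x <= k0 -> k0 <= y -> y < K -> G x y = piC.
Proof.
  intros. rewrite Gk_eq_min_phi1 by assumption.
  apply Rmin_right, piC_le_phi1; assumption.
Qed.

Lemma LV_pos : 0 < L / V.
Proof. apply Rdiv_lt_0_compat; assumption. Qed.

Lemma LW_pos : 0 < L / W.
Proof. apply Rdiv_lt_0_compat; assumption. Qed.

Lemma k1T_in_k1 T : 0 < T -> I1 (k1T L V W K pi T).
Proof.
  intros hT. pose proof Kbar_bounds.
  destruct (ratio_bounds pi (L / V / T)) as [hr1 hrpi];
    [exact hpi | apply Rdiv_lt_0_compat; [exact LV_pos | exact hT] |].
  assert (0 < pi * Kb) by (apply Rmult_lt_0_compat; lra).
  unfold in_k1, k1T. split; nra.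
Qed.

Lemma k2T_in_k2 T : 0 < T -> I2 (k2T L V W K pi T).
Proof.
  intros hT. pose proof Kbar_bounds.
  destruct (ratio_bounds pi (L / W / T)) as [hr1 hrpi];
    [exact hpi | apply Rdiv_lt_0_compat; [exact LW_pos | exact hT] |].
  assert (0 < pi * (K - Kb)) by (apply Rmult_lt_0_compat; lra).
  unfold in_k2, k2T. rewrite Ccap_div_W. split; nra.
Qed.

Lemma phi1_k1T T : 0 < T -> p1 (k1T L V W K pi T) = V * k0 / ratio pi (L / V / T).
Proof.
  intros hT. pose proof Kbar_bounds.
  destruct (ratio_bounds pi (L / V / T)) as [hr1 _];
    [exact hpi | apply Rdiv_lt_0_compat; [exact LV_pos | exact hT] |].
  unfold phi1, k1T, Ccap. field. repeat split; lra.
Qed.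

Lemma phi2_k2T T : 0 < T -> p2 (k2T L V W K pi T) = (K - k0) * W / ratio pi (L / W / T).
Proof.
  intros hT. pose proof Kbar_bounds.
  destruct (ratio_bounds pi (L / W / T)) as [hr1 _];
    [exact hpi | apply Rdiv_lt_0_compat; [exact LW_pos | exact hT] |].
  unfold phi2, k2T. rewrite Ccap_div_W, Ccap_eq_W.
  replace (K - (K - ratio pi (L / W / T) * pi * (K - Kb)))
    with (ratio pi (L / W / T) * pi * (K - Kb)) by ring.
  field. repeat split; lra.
Qed.

Lemma phi1_k1T_bounds T : 0 < T -> pi * V * k0 <= p1 (k1T L V W K pi T) <= V * k0.
Proof.
  intros hT. rewrite phi1_k1T, Rmult_assoc by exact hT.
  apply div_ratio_bounds; [exact hpi | | apply Rmult_le_pos; lra].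
  apply Rdiv_lt_0_compat; [exact LV_pos | exact hT].
Qed.

Lemma phi1_k1T_at_divisor (j : nat) : (0 < j)%nat ->
  p1 (k1T L V W K pi (/ INR j * (L / V))) = V * k0.
Proof.
  intros hj. rewrite phi1_k1T by (apply Rinv_INR_mul_pos; [exact hj | exact LV_pos]).
  rewrite ratio_at_divisor by (exact hj || exact LV_pos || lra). apply Rdiv_1_r.
Qed.

Lemma phi1_k1T_long T : / pi * (L / V) <= T -> p1 (k1T L V W K pi T) = pi * V * k0.
Proof.
  intros hT.
  rewrite phi1_k1T by (apply (long_cycle_pos pi (L / V)); [lra | exact LV_pos | exact hT]).
  rewrite ratio_at_long by (exact hpi || exact LV_pos || exact hT). field. lra.
Qed.

Lemma phi2_k2T_bounds T : 0 < T ->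
  pi * (K - k0) * W <= p2 (k2T L V W K pi T) <= (K - k0) * W.
Proof.
  intros hT. rewrite phi2_k2T, Rmult_assoc by exact hT.
  apply div_ratio_bounds; [exact hpi | | apply Rmult_le_pos; lra].
  apply Rdiv_lt_0_compat; [exact LW_pos | exact hT].
Qed.

Lemma phi2_k2T_at_divisor (j : nat) : (0 < j)%nat ->
  p2 (k2T L V W K pi (/ INR j * (L / W))) = (K - k0) * W.
Proof.
  intros hj. rewrite phi2_k2T by (apply Rinv_INR_mul_pos; [exact hj | exact LW_pos]).
  rewrite ratio_at_divisor by (exact hj || exact LW_pos || lra). apply Rdiv_1_r.
Qed.

Lemma phi2_k2T_long T : / pi * (L / W) <= T -> p2 (k2T L V W K pi T) = pi * (K - k0) * W.
Proof.
  intros hT.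
  rewrite phi2_k2T by (apply (long_cycle_pos pi (L / W)); [lra | exact LW_pos | exact hT]).
  rewrite ratio_at_long by (exact hpi || exact LW_pos || exact hT). field. lra.
Qed.

Lemma gbarT_low_density : 0 <= k0 < pi * Kb ->
  (forall k1 k2, I1 k1 -> I2 k2 -> G k1 k2 = p1 k1) /\
  (forall k1 k2 k2', I1 k1 -> I2 k2 -> I2 k2' -> G k1 k2 = G k1 k2') /\
  (forall k2 a b, I2 k2 -> I1 a -> I1 b -> a < b -> G b k2 <= G a k2) /\
  (0 < k0 -> forall k2 a b, I2 k2 -> I1 a -> I1 b -> a < b -> G b k2 < G a k2) /\
  (forall T, 0 < T -> g T <= V * k0) /\
  (forall j : nat, (0 < j)%nat -> g (/ INR j * (L / V)) = V * k0) /\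
  (forall T, 0 < T -> pi * V * k0 <= g T) /\
  (forall T, / pi * (L / V) <= T -> g T = pi * V * k0).
Proof.
  intros hk. pose proof k_ranges_bounds.
  assert (hG : forall k1 k2, I1 k1 -> I2 k2 -> G k1 k2 = p1 k1).
  { unfold in_k1, in_k2. intros k1 k2 h1 h2. apply Gk_eq_phi1; lra. }
  assert (hg : forall T, 0 < T -> g T = p1 (k1T L V W K pi T)).
  { intros T hT. apply hG; [apply k1T_in_k1 | apply k2T_in_k2]; exact hT. }
  repeat split.
  - exact hG.
  - intros k1 k2 k2' h1 h2 h2'. rewrite !hG by assumption. reflexivity.
  - intros k2 a b h2 ha hb hab. rewrite !hG by assumption.
    apply phi1_le_contravar; unfold in_k1 in ha; lra.
  - intros hk0' k2 a b h2 ha hb hab. rewrite !hG by assumption.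
    apply phi1_lt_contravar; unfold in_k1 in ha; lra.
  - intros T hT. rewrite hg by exact hT. exact (proj2 (phi1_k1T_bounds T hT)).
  - intros j hj. rewrite hg by (apply Rinv_INR_mul_pos; [exact hj | exact LV_pos]).
    apply phi1_k1T_at_divisor, hj.
  - intros T hT. rewrite hg by exact hT. exact (proj1 (phi1_k1T_bounds T hT)).
  - intros T hT. rewrite hg by (apply (long_cycle_pos pi (L / V)); [lra | exact LV_pos | exact hT]).
    apply phi1_k1T_long, hT.
Qed.

Lemma gbarT_lower_moderate_density : pi * Kb <= k0 < Kb ->
  (forall k1 k2, I1 k1 -> I2 k2 -> G k1 k2 = Rmin (p1 k1) piC) /\
  (forall k1 k2 k2', I1 k1 -> I2 k2 -> I2 k2' -> G k1 k2 = G k1 k2') /\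
  (forall k2 a b, I2 k2 -> I1 a -> I1 b -> a <= k0 -> b <= k0 -> G a k2 = G b k2) /\
  (forall k2 a b, I2 k2 -> k0 < a -> a < b -> b <= Kb -> G b k2 < G a k2) /\
  (forall T, 0 < T -> g T <= piC) /\
  (exists T, 0 < T /\ g T = piC) /\
  (forall T, 0 < T -> pi * V * k0 <= g T) /\
  (forall T, / pi * (L / V) <= T -> g T = pi * V * k0).
Proof.
  intros hk. pose proof k_ranges_bounds.
  assert (hVk : pi * V * k0 < piC).
  { unfold Ccap. rewrite <- Rmult_assoc. apply Rmult_lt_compat_l; [|lra].
    apply Rmult_lt_0_compat; lra. }
  assert (hG : forall k1 k2, I2 k2 -> G k1 k2 = Rmin (p1 k1) piC).
  { unfold in_k2. intros k1 k2 h2. apply Gk_eq_min_phi1; lra. }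
  assert (hg : forall T, 0 < T -> g T = Rmin (p1 (k1T L V W K pi T)) piC).
  { intros T hT. apply hG, k2T_in_k2, hT. }
  repeat split.
  - intros k1 k2 _ h2. apply hG, h2.
  - intros k1 k2 k2' _ h2 h2'. rewrite !hG by assumption. reflexivity.
  - intros k2 a b h2 ha hb hak hbk. unfold in_k1 in ha, hb.
    rewrite !hG, !Rmin_right by (assumption || apply piC_le_phi1; lra). reflexivity.
  - intros k2 a b h2 hka hab hbK.
    rewrite !hG, !Rmin_left by (assumption || apply phi1_le_piC; lra).
    apply phi1_lt_contravar; lra.
  - intros T hT. rewrite hg by exact hT. apply Rmin_r.
  - exists (/ INR 1 * (L / V)).
    assert (hT : 0 < / INR 1 * (L / V)) by (apply Rinv_INR_mul_pos; [lia | exact LV_pos]).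
    split; [exact hT|]. rewrite hg, phi1_k1T_at_divisor by (exact hT || lia).
    apply Rmin_right. unfold Ccap. rewrite <- Rmult_assoc, (Rmult_comm pi V), Rmult_assoc.
    apply Rmult_le_compat_l; lra.
  - intros T hT. rewrite hg by exact hT.
    apply Rmin_glb; [exact (proj1 (phi1_k1T_bounds T hT)) | lra].
  - intros T hT.
    assert (hT0 : 0 < T) by (apply (long_cycle_pos pi (L / V)); [lra | exact LV_pos | exact hT]).
    rewrite hg, phi1_k1T_long by assumption. apply Rmin_left. lra.
Qed.

Lemma gbarT_critical_density : k0 = Kb ->
  (forall k1 k2, I1 k1 -> I2 k2 -> G k1 k2 = piC) /\
  (forall T, 0 < T -> g T = piC).
Proof.
  intros hk. pose proof k_ranges_bounds.
  assert (hG : forall k1 k2, I1 k1 -> I2 k2 -> G k1 k2 = piC).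
  { unfold in_k1, in_k2. intros k1 k2 h1 h2. apply Gk_eq_piC; lra. }
  split; [exact hG|].
  intros T hT. apply hG; [apply k1T_in_k1 | apply k2T_in_k2]; exact hT.
Qed.

Lemma gbarT_upper_moderate_density : Kb < k0 <= K - pi * (Ccap V W K / W) ->
  (forall k1 k2, I1 k1 -> I2 k2 -> G k1 k2 = Rmin (p2 k2) piC) /\
  (forall k1 k1' k2, I1 k1 -> I1 k1' -> I2 k2 -> G k1 k2 = G k1' k2) /\
  (forall k1 a b, I1 k1 -> Kb <= a -> a < b -> b < k0 -> G k1 a < G k1 b) /\
  (forall k1 a b, I1 k1 -> I2 a -> I2 b -> k0 <= a -> k0 <= b -> G k1 a = G k1 b) /\
  (forall T, 0 < T -> g T <= piC) /\
  (exists T, 0 < T /\ g T = piC) /\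
  (forall T, 0 < T -> pi * (K - k0) * W <= g T) /\
  (forall T, / pi * (L / W) <= T -> g T = pi * (K - k0) * W).
Proof.
  intros hk. pose proof k_ranges_bounds.
  assert (hWk : pi * (K - k0) * W < piC).
  { rewrite Ccap_eq_W, (Rmult_comm W), <- Rmult_assoc. apply Rmult_lt_compat_r; [lra|].
    apply Rmult_lt_compat_l; lra. }
  assert (hG : forall k1 k2, I1 k1 -> G k1 k2 = Rmin (p2 k2) piC).
  { unfold in_k1. intros k1 k2 h1. apply Gk_eq_min_phi2; lra. }
  assert (hg : forall T, 0 < T -> g T = Rmin (p2 (k2T L V W K pi T)) piC).
  { intros T hT. apply hG, k1T_in_k1, hT. }
  repeat split.
  - intros k1 k2 h1 _. apply hG, h1.
  - intros k1 k1' k2 h1 h1' _. rewrite !hG by assumption. reflexivity.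
  - intros k1 a b h1 hKa hab hbk.
    rewrite !hG, !Rmin_left by (assumption || apply phi2_le_piC; lra).
    apply phi2_lt_compat; lra.
  - intros k1 a b h1 ha hb hka hkb. unfold in_k2 in ha, hb.
    rewrite !hG, !Rmin_right by (assumption || apply piC_le_phi2; lra). reflexivity.
  - intros T hT. rewrite hg by exact hT. apply Rmin_r.
  - exists (/ INR 1 * (L / W)).
    assert (hT : 0 < / INR 1 * (L / W)) by (apply Rinv_INR_mul_pos; [lia | exact LW_pos]).
    split; [exact hT|]. rewrite hg, phi2_k2T_at_divisor by (exact hT || lia).
    apply Rmin_right.
    replace piC with (pi * (Ccap V W K / W) * W) by (field; lra).
    apply Rmult_le_compat_r; lra.
  - intros T hT. rewrite hg by exact hT.
    apply Rmin_glb; [exact (proj1 (phi2_k2T_bounds T hT)) | lra].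
  - intros T hT.
    assert (hT0 : 0 < T) by (apply (long_cycle_pos pi (L / W)); [lra | exact LW_pos | exact hT]).
    rewrite hg, phi2_k2T_long by assumption. apply Rmin_left. lra.
Qed.

Lemma gbarT_high_density : K - pi * (Ccap V W K / W) < k0 <= K ->
  (forall k1 k2, I1 k1 -> I2 k2 -> G k1 k2 = p2 k2) /\
  (forall k1 k1' k2, I1 k1 -> I1 k1' -> I2 k2 -> G k1 k2 = G k1' k2) /\
  (forall k1 a b, I1 k1 -> I2 a -> I2 b -> a < b -> G k1 a <= G k1 b) /\
  (k0 < K -> forall k1 a b, I1 k1 -> I2 a -> I2 b -> a < b -> G k1 a < G k1 b) /\
  (forall T, 0 < T -> g T <= (K - k0) * W) /\
  (forall j : nat, (0 < j)%nat -> g (/ INR j * (L / W)) = (K - k0) * W) /\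
  (forall T, 0 < T -> pi * (K - k0) * W <= g T) /\
  (forall T, / pi * (L / W) <= T -> g T = pi * (K - k0) * W).
Proof.
  intros hk. pose proof k_ranges_bounds.
  assert (hG : forall k1 k2, I1 k1 -> I2 k2 -> G k1 k2 = p2 k2).
  { unfold in_k1, in_k2. intros k1 k2 h1 h2. apply Gk_eq_phi2; lra. }
  assert (hg : forall T, 0 < T -> g T = p2 (k2T L V W K pi T)).
  { intros T hT. apply hG; [apply k1T_in_k1 | apply k2T_in_k2]; exact hT. }
  repeat split.
  - exact hG.
  - intros k1 k1' k2 h1 h1' h2. rewrite !hG by assumption. reflexivity.
  - intros k1 a b h1 ha hb hab. rewrite !hG by assumption.
    apply phi2_le_compat; unfold in_k2 in hb; lra.
  - intros hkK k1 a b h1 ha hb hab. rewrite !hG by assumption.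
    apply phi2_lt_compat; unfold in_k2 in hb; lra.
  - intros T hT. rewrite hg by exact hT. exact (proj2 (phi2_k2T_bounds T hT)).
  - intros j hj. rewrite hg by (apply Rinv_INR_mul_pos; [exact hj | exact LW_pos]).
    apply phi2_k2T_at_divisor, hj.
  - intros T hT. rewrite hg by exact hT. exact (proj1 (phi2_k2T_bounds T hT)).
  - intros T hT. rewrite hg by (apply (long_cycle_pos pi (L / W)); [lra | exact LW_pos | exact hT]).
    apply phi2_k2T_long, hT.
Qed.

End FlowRate.

Theorem lemma3p5 (L V W K pi k0 : R)
  (hL : 0 < L) (hV : 0 < V) (hW : 0 < W) (hK : 0 < K)
  (hpi : 0 < pi < 1) (hk0 : 0 <= k0 <= K) :
  let Kb := Kbar V W K in
  let C := Ccap V W K in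
  let G := Gk V W K pi k0 in
  let p1 := phi1 V W K pi k0 in
  let p2 := phi2 V W K pi k0 in
  let g := gbarT L V W K pi k0 in
  let I1 := in_k1 V W K pi in
  let I2 := in_k2 V W K pi in
  (* (1) *)
  ((0 <= k0 < pi * Kb) ->
     (forall k1 k2, I1 k1 -> I2 k2 -> G k1 k2 = p1 k1) /\
     (forall k1 k2 k2', I1 k1 -> I2 k2 -> I2 k2' -> G k1 k2 = G k1 k2') /\
     (forall k2 a b, I2 k2 -> I1 a -> I1 b -> a < b -> G b k2 <= G a k2) /\
     (0 < k0 -> forall k2 a b, I2 k2 -> I1 a -> I1 b -> a < b -> G b k2 < G a k2) /\
     (forall T, 0 < T -> g T <= V * k0) /\
     (forall j : nat, (0 < j)%nat -> g (/ INR j * (L / V)) = V * k0) /\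
     (forall T, 0 < T -> pi * V * k0 <= g T) /\
     (forall T, / pi * (L / V) <= T -> g T = pi * V * k0)) /\
  (* (2) *)
  ((pi * Kb <= k0 < Kb) ->
     (forall k1 k2, I1 k1 -> I2 k2 -> G k1 k2 = Rmin (p1 k1) (pi * C)) /\
     (forall k1 k2 k2', I1 k1 -> I2 k2 -> I2 k2' -> G k1 k2 = G k1 k2') /\
     (forall k2 a b, I2 k2 -> I1 a -> I1 b -> a <= k0 -> b <= k0 -> G a k2 = G b k2) /\
     (forall k2 a b, I2 k2 -> k0 < a -> a < b -> b <= Kb -> G b k2 < G a k2) /\
     (forall T, 0 < T -> g T <= pi * C) /\
     (exists T, 0 < T /\ g T = pi * C) /\
     (forall T, 0 < T -> pi * V * k0 <= g T) /\
     (forall T, / pi * (L / V) <= T -> g T = pi * V * k0)) /\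
  (* (3) *)
  (k0 = Kb ->
     (forall k1 k2, I1 k1 -> I2 k2 -> G k1 k2 = pi * C) /\
     (forall T, 0 < T -> g T = pi * C)) /\
  (* (4) *)
  ((Kb < k0 <= K - pi * (C / W)) ->
     (forall k1 k2, I1 k1 -> I2 k2 -> G k1 k2 = Rmin (p2 k2) (pi * C)) /\
     (forall k1 k1' k2, I1 k1 -> I1 k1' -> I2 k2 -> G k1 k2 = G k1' k2) /\
     (forall k1 a b, I1 k1 -> Kb <= a -> a < b -> b < k0 -> G k1 a < G k1 b) /\
     (forall k1 a b, I1 k1 -> I2 a -> I2 b -> k0 <= a -> k0 <= b -> G k1 a = G k1 b) /\
     (forall T, 0 < T -> g T <= pi * C) /\
     (exists T, 0 < T /\ g T = pi * C) /\
     (forall T, 0 < T -> pi * (K - k0) * W <= g T) /\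
     (forall T, / pi * (L / W) <= T -> g T = pi * (K - k0) * W)) /\
  (* (5) *)
  ((K - pi * (C / W) < k0 <= K) ->
     (forall k1 k2, I1 k1 -> I2 k2 -> G k1 k2 = p2 k2) /\
     (forall k1 k1' k2, I1 k1 -> I1 k1' -> I2 k2 -> G k1 k2 = G k1' k2) /\
     (forall k1 a b, I1 k1 -> I2 a -> I2 b -> a < b -> G k1 a <= G k1 b) /\
     (k0 < K -> forall k1 a b, I1 k1 -> I2 a -> I2 b -> a < b -> G k1 a < G k1 b) /\
     (forall T, 0 < T -> g T <= (K - k0) * W) /\
     (forall j : nat, (0 < j)%nat -> g (/ INR j * (L / W)) = (K - k0) * W) /\
     (forall T, 0 < T -> pi * (K - k0) * W <= g T) /\
     (forall T, / pi * (L / W) <= T -> g T = pi * (K - k0) * W)).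
Proof.
  cbv zeta.
  split; [|split; [|split; [|split]]]; intros hk.
  - apply gbarT_low_density; assumption.
  - apply gbarT_lower_moderate_density; assumption.
  - apply gbarT_critical_density; assumption.
  - apply gbarT_upper_moderate_density; assumption.
  - apply gbarT_high_density; assumption.
Qed.
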